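(* Let $R$ be a ring, let $X$ be an $R^\circ$-complex and let $Y$ be a bounded above $R$-complex with $\sup Y=k\in\mathbb{Z}$. Then there is an exact sequence of $\mathbb{Z}$-complexes $$0\to\prod_{i\in\mathbb{N}}(X\otimes_RY_{\le k-i})\xrightarrow{1-\varepsilon}\prod_{i\in\mathbb{N}}(X\otimes_RY_{\le k-i})\to X\check\otimes_RY\to0,$$ where $\varepsilon$ denotes the inverse system of inclusions $X\otimes_RY_{\le k-v}\to X\otimes_RY_{\le k-u}$ ($u\le v$) induced by the filtration $Y_{\le k}\supseteq Y_{\le k-1}\supseteq\cdots$, and $1-\varepsilon$ is given by $(z_i)_i\mapsto(z_i-\varepsilon^{i,i+1}(z_{i+1}))_i$.
   Context: For an $R$-complex $Y$, $\sup Y=\sup\{i: Y_i\neq0\}$, and $Y_{\le m}$ is the subcomplex with $(Y_{\le m})_i=Y_i$ for $i\le m$ and $0$ otherwise. For an $R^\circ$-complex $X$ and an $R$-complex $Y$: $X\otimes_RY$ has degree-$n$ term $\coprod_{i}X_i\otimes_RY_{n-i}$, differential $\partial(x\otimes y)=\partial^X(x)\otimes y+(-1)^{|x|}x\otimes\partial^Y(y)$; $X\bar\otimes_RY$ has degree-$n$ term $\prod_iX_i\otimes_RY_{n-i}$ with the same differential; the stable tensor product is $X\check\otimes_RY=(X\bar\otimes_RY)/(X\otimes_RY)$. *)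

From HB Require Import structures.
From mathcomp Require Import all_boot all_order all_algebra.
From Stdlib Require Import ClassicalEpsilon.
Set Implicit Arguments. Unset Strict Implicit. Unset Printing Implicit Defensive.
Import Order.TTheory GRing.Theory Num.Theory.
Local Open Scope ring_scope.

Definition is_additive (U V : zmodType) (f : U -> V) : Prop :=
  forall x y, f (x - y) = f x - f y.

(* Right R-modules are left modules over the converse ring R^c:
   the right action  m . r  is written  (r : R^c) *: m. *)
Definition balanced (R : pzRingType) (M : lmodType R^c) (N : lmodType R)
  (A : zmodType) (f : M -> N -> A) : Prop :=
  [/\ forall n, is_additive (fun m => f m n),
      forall m, is_additive (f m) &
      forall (r : R) (m : M) (n : N), f ((r : R^c) *: m) n = f m (r *: n)].

Record tensor_product (R : pzRingType) (M : lmodType R^c) (N : lmodType R) := TensorProduct {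
  tp_car :> zmodType;
  tp_tens : M -> N -> tp_car;
  tp_bal : balanced tp_tens;
  tp_univ : forall (A : zmodType) (f : M -> N -> A), balanced f ->
    exists g : tp_car -> A,
      [/\ is_additive g, forall m n, g (tp_tens m n) = f m n &
          forall g' : tp_car -> A, is_additive g' ->
            (forall m n, g' (tp_tens m n) = f m n) -> forall t, g' t = g t] }.

Definition tmap (R : pzRingType) (M M' : lmodType R^c) (N N' : lmodType R)
  (T : tensor_product M N) (T' : tensor_product M' N')
  (f : M -> M') (g : N -> N') : T -> T' :=
  epsilon (inhabits (fun _ => 0))
    (fun h : T -> T' => is_additive h /\
       forall m n, h (tp_tens T m n) = tp_tens T' (f m) (g n)).
Arguments tmap {R M M' N N'} T T' f g.

Record complex (S : pzRingType) := Complex {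
  cobj :> int -> lmodType S;
  cdiff : forall i : int, {linear cobj (i + 1) -> cobj i};
  cdiff2 : forall (i : int) (x : cobj (i + 1 + 1)), cdiff i (cdiff (i + 1) x) = 0 }.

Definition sup_eq (R : pzRingType) (Y : complex R) (k : int) : Prop :=
  (exists y : Y k, y != 0) /\ (forall j : int, k < j -> forall y : Y j, y = 0).

Section Tensor.
Variables (R : pzRingType) (X : complex R^c) (Y : complex R).
Variable tp : forall i j : int, tensor_product (X i) (Y j).

(* The degree-n term
   prod_i X_i (x) Y_(n-i) of the complex X bar(x) Y is the set of families
   supported on {i + j = n}; the degree-n term of X (x)_R Y is the set of such
   families with finite support. *)
Definition fam := forall i j : int, tp i j.

Definition fam_sub (f g : fam) : fam := fun i j => f i j - g i j.

Definition deg (n : int) (f : fam) : Prop :=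
  forall i j : int, i + j != n -> f i j = 0.

Definition finsupp (f : fam) : Prop :=
  exists s : seq (int * int), forall i j : int, (i, j) \notin s -> f i j = 0.

Definition sgn_tw (i : int) (A : zmodType) (x : A) : A :=
  if odd `|i|%N then - x else x.

(* the differential  d(x (x) y) = dx (x) y + (-1)^|x| x (x) dy,
   same formula on X (x) Y and X bar(x) Y *)
Definition tdiff (f : fam) : fam := fun i j =>
  tmap (tp (i + 1) j) (tp i j) (cdiff X i) idfun (f (i + 1) j)
  + sgn_tw i (tmap (tp i (j + 1)) (tp i j) idfun (cdiff Y j) (f i (j + 1))).

(* element of (X (x)_R Y_(<= m))_n, viewed as the subcomplex of X (x)_R Y
   spanned by the X_i (x) Y_j with j <= m *)
Definition trunc_elem (m n : int) (f : fam) : Prop :=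
  [/\ deg n f, finsupp f & forall i j : int, m < j -> f i j = 0].

Definition prod_elem (k n : int) (z : nat -> fam) : Prop :=
  forall m : nat, trunc_elem (k - m%:Z) n (z m).

Definition pdiff (z : nat -> fam) : nat -> fam := fun m => tdiff (z m).

Definition one_minus_eps (z : nat -> fam) : nat -> fam :=
  fun m => fam_sub (z m) (z m.+1).

End Tensor.

Arguments fam {R X Y} tp.
Arguments fam_sub {R X Y tp} f g i j.
Arguments deg {R X Y tp} n f.
Arguments finsupp {R X Y tp} f.
Arguments tdiff {R X Y} tp f i j.
Arguments trunc_elem {R X Y} tp m n f.
Arguments prod_elem {R X Y} tp k n z.
Arguments pdiff {R X Y} tp z m i j.
Arguments one_minus_eps {R X Y tp} z m i j.

From HB Require Import structures.
From mathcomp Require Import all_boot all_order all_algebra.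
From mathcomp Require Import zify.
From Stdlib Require Import ClassicalEpsilon.
Import Order.TTheory GRing.Theory.
Local Open Scope ring_scope.
Set Implicit Arguments.
Unset Strict Implicit.

(** A family [z = (z_m)_m] in the product [prod_m X (x) Y_(<= k-m)] has
    [z_m i j = 0] as soon as [j > k - m], so [pi z := sum_m z_m] is a
    well-defined element of [X bar(x) Y], computed entrywise by a finite sum.
    On an image [(1 - eps) w] this sum telescopes to [w_0], which is finitely
    supported; conversely, if [pi z] is finitely supported then
    [w_m := pi z - sum_(l < m) z_l] lies in the product and [(1 - eps) w = z].
    An element [f] of [X bar(x) Y] is hit exactly by [pi] of the family whose
    [m]-th member is the row [j = k - m] of [f]; rows with [j > k] vanish since
    [Y_j = 0].  Injectivity of [1 - eps] holds because a constant family of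
    the product must vanish. *)

Definition additive_of (U V : zmodType) (f : U -> V) (hf : is_additive f) :
  {additive U -> V} := HB.pack f (GRing.isZmodMorphism.Build U V f hf).

(* Stated for [f] itself: [raddf_sum] is keyed on the packed morphism and does
   not rewrite occurrences of [f]. *)
Lemma additive_sum (U V : zmodType) (f : U -> V) (hf : is_additive f)
    (I : Type) (r : seq I) (P : pred I) (F : I -> U) :
  f (\sum_(i <- r | P i) F i) = \sum_(i <- r | P i) f (F i).
Proof. exact: (raddf_sum (additive_of hf)). Qed.

Lemma sumr_ord_vanish (V : zmodType) (F : nat -> V) (a b : nat) :
  (forall m, (a <= m)%N -> F m = 0) -> (a <= b)%N ->
  \sum_(m < b) F m = \sum_(m < a) F m.
Proof.
move=> F0 le_ab; rewrite -!(big_mkord xpredT) (big_cat_nat (leq0n a) le_ab) /=.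
rewrite [X in _ + X]big1_seq ?addr0 // => m /andP[_].
by rewrite mem_index_iota => /andP[/F0].
Qed.

Lemma sumr_telescope (V : zmodType) (w : nat -> V) (N : nat) :
  \sum_(m < N) (w m - w m.+1) = w 0%N - w N.
Proof.
under eq_bigr do rewrite -opprB.
by rewrite sumrN -(big_mkord xpredT (fun m => w m.+1 - w m)) telescope_sumr ?opprB.
Qed.

Section TensorProduct.
Variables (R : pzRingType) (M M' : lmodType R^c) (N N' : lmodType R).

Lemma tmap_is_additive {T : tensor_product M N} {T' : tensor_product M' N'}
    (f : {linear M -> M'}) (g : {linear N -> N'}) :
  is_additive (tmap T T' f g).
Proof.
have [balB1 balB2 balZ] := tp_bal T'.
have bal : balanced (fun m n => tp_tens T' (f m) (g n)).
  split=> [n a b | m a b | r m n] /=.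
  - by rewrite linearB balB1.
  - by rewrite linearB balB2.
  - by rewrite !linearZ balZ.
have [h [h_add h_tens _]] := tp_univ T bal.
have ex_h : exists h : T -> T', is_additive h /\
    forall m n, h (tp_tens T m n) = tp_tens T' (f m) (g n) by exists h.
exact: (epsilon_spec (inhabits (fun _ => 0)) _ ex_h).1.
Qed.

(* Both the identity and the zero map extend the zero balanced map. *)
Lemma tensor_eq0 (T : tensor_product M N) (t : T) :
  (forall n : N, n = 0) -> t = 0.
Proof.
move=> N0; have [_ balB2 _] := tp_bal T.
have bal0 : balanced (fun (_ : M) (_ : N) => 0 : T).
  by split=> [n x y | m x y |] /=; rewrite ?subr0.
have [g [_ _ g_uniq]] := tp_univ T bal0.
have tens0 m n : tp_tens T m n = 0.
  by rewrite (N0 n); exact: (raddf0 (additive_of (balB2 m))).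
exact: etrans (g_uniq id (fun _ _ => erefl) tens0 t)
  (esym (g_uniq (fun _ => 0) (fun _ _ => esym (subr0 0)) (fun _ _ => erefl) t)).
Qed.

End TensorProduct.

Lemma sgn_tw_is_additive (i : int) (V : zmodType) : is_additive (@sgn_tw i V).
Proof. by move=> x y; rewrite /sgn_tw; case: ifP => // _; rewrite opprD. Qed.

Section Families.
Variables (R : pzRingType) (X : complex R^c) (Y : complex R).
Variable tp : forall i j : int, tensor_product (X i) (Y j).

Lemma finsupp0 (f : fam tp) : (forall i j, f i j = 0) -> finsupp f.
Proof. by move=> f0; exists [::] => i j _; apply: f0. Qed.

Lemma eq_finsupp (f g : fam tp) :
  (forall i j, f i j = g i j) -> finsupp g -> finsupp f.
Proof. by move=> fg [s g0]; exists s => i j ij_s; rewrite fg g0. Qed.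

Lemma finsuppB (f g : fam tp) : finsupp f -> finsupp g -> finsupp (fam_sub f g).
Proof.
move=> [s f0] [s' g0]; exists (s ++ s') => i j.
by rewrite /fam_sub mem_cat negb_or => /andP[/f0-> /g0->]; rewrite subrr.
Qed.

Lemma finsupp_sum (z : nat -> fam tp) (N : nat) :
  (forall m, finsupp (z m)) -> finsupp (fun i j => \sum_(m < N) z m i j).
Proof.
move=> z_fin; elim: N => [|N [s IH]]; first by apply: finsupp0 => i j; rewrite big_ord0.
have [s' zN0] := z_fin N; exists (s ++ s') => i j.
by rewrite mem_cat negb_or big_ord_recr /= => /andP[/IH-> /zN0->]; rewrite addr0.
Qed.

Lemma tdiffB (f g : fam tp) (i j : int) :
  tdiff tp (fam_sub f g) i j = tdiff tp f i j - tdiff tp g i j.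
Proof.
rewrite /tdiff /fam_sub (tmap_is_additive (cdiff X i) idfun).
rewrite (tmap_is_additive idfun (cdiff Y j)) sgn_tw_is_additive.
by rewrite opprD addrACA.
Qed.

Lemma tdiff_sum (z : nat -> fam tp) (N : nat) (i j : int) :
  tdiff tp (fun i j => \sum_(m < N) z m i j) i j = \sum_(m < N) tdiff tp (z m) i j.
Proof.
rewrite /tdiff big_split /= (additive_sum (tmap_is_additive (cdiff X i) idfun)).
rewrite (additive_sum (tmap_is_additive idfun (cdiff Y j))).
by rewrite (additive_sum (@sgn_tw_is_additive i _)).
Qed.

Lemma eq_tdiff (f g : fam tp) (i j : int) :
  f (i + 1) j = g (i + 1) j -> f i (j + 1) = g i (j + 1) ->
  tdiff tp f i j = tdiff tp g i j.
Proof. by rewrite /tdiff => -> ->. Qed.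

Lemma pdiff_one_minus_eps (z : nat -> fam tp) (m : nat) (i j : int) :
  pdiff tp (one_minus_eps z) m i j = one_minus_eps (pdiff tp z) m i j.
Proof. exact: tdiffB. Qed.

End Families.

Section Product.
Variables (R : pzRingType) (X : complex R^c) (Y : complex R).
Variables (tp : forall i j : int, tensor_product (X i) (Y j)) (k : int).

(* The bound: [z m i j = 0] once [k - m < j], in particular for [m > `|k - j|]. *)
Definition sum_fam (z : nat -> fam tp) : fam tp :=
  fun i j => \sum_(m < `|k - j|.+1) z m i j.

Lemma prod_elem_vanish (n : int) (z : nat -> fam tp) {m : nat} {i j : int} :
  prod_elem tp k n z -> k - j < m%:Z -> z m i j = 0.
Proof. by move=> zP lt_kj; have [_ _ -> //] := zP m; lia. Qed.

Lemma sum_famE (n : int) (z : nat -> fam tp) (b : nat) (i j : int) :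
  prod_elem tp k n z -> (forall m, (b <= m)%N -> z m i j = 0) ->
  sum_fam z i j = \sum_(m < b) z m i j.
Proof.
move=> zP zb0; rewrite /sum_fam; case: (leqP `|k - j|.+1 b) => [le_Nb | lt_bN].
  have z0 m : (`|k - j|.+1 <= m)%N -> z m i j = 0.
    by move=> le_m; apply: (prod_elem_vanish zP); lia.
  by rewrite (sumr_ord_vanish z0 le_Nb).
by rewrite (sumr_ord_vanish zb0) // ltnW.
Qed.

Lemma prod_elem_one_minus_eps (n : int) (z : nat -> fam tp) :
  prod_elem tp k n z -> prod_elem tp k n (one_minus_eps z).
Proof.
move=> zP m; have [zm_deg zm_fin zm0] := zP m; have [zSm_deg zSm_fin zSm0] := zP m.+1.
rewrite /one_minus_eps /fam_sub; split=> [i j ij_n | | i j lt_j].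
- by rewrite zm_deg // zSm_deg // subrr.
- exact: finsuppB.
- by rewrite zm0 // zSm0 ?subrr //; lia.
Qed.

Lemma deg_sum_fam (n : int) (z : nat -> fam tp) :
  prod_elem tp k n z -> deg n (sum_fam z).
Proof. by move=> zP i j ij_n; apply: big1 => m _; have [-> //] := zP m. Qed.

Lemma sum_famB (z z' : nat -> fam tp) (i j : int) :
  sum_fam (fun m => fam_sub (z m) (z' m)) i j = fam_sub (sum_fam z) (sum_fam z') i j.
Proof. exact: sumrB. Qed.

Lemma tdiff_sum_fam (n : int) (z : nat -> fam tp) (i j : int) :
  prod_elem tp k (n + 1) z -> tdiff tp (sum_fam z) i j = sum_fam (pdiff tp z) i j.
Proof.
move=> zP; rewrite /sum_fam -tdiff_sum; apply: eq_tdiff => //.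
by apply: (sum_famE zP) => m le_m; apply: (prod_elem_vanish zP); lia.
Qed.

Lemma one_minus_eps_inj (n : int) (z : nat -> fam tp) :
  prod_elem tp k n z -> (forall m i j, one_minus_eps z m i j = 0) ->
  forall m i j, z m i j = 0.
Proof.
move=> zP z_const m i j.
have zE p : z p i j = z 0%N i j.
  by elim: p => [|p <-] //; apply/eqP; rewrite eq_sym -subr_eq0; apply/eqP/(z_const p i j).
by rewrite zE -(zE `|k - j|.+1); apply: (prod_elem_vanish zP); lia.
Qed.

Lemma sum_fam_one_minus_eps (n : int) (w : nat -> fam tp) (i j : int) :
  prod_elem tp k n w -> sum_fam (one_minus_eps w) i j = w 0%N i j.
Proof.
move=> wP; rewrite /sum_fam /one_minus_eps /fam_sub (sumr_telescope (fun m => w m i j)).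
by rewrite [w _.+1 i j](prod_elem_vanish wP) ?subr0 //; lia.
Qed.

Lemma finsupp_sum_famP (n : int) (z : nat -> fam tp) :
  prod_elem tp k n z ->
  finsupp (sum_fam z) <->
  exists w, prod_elem tp k n w /\ forall m i j, z m i j = one_minus_eps w m i j.
Proof.
move=> zP; split=> [sum_fin | [w [wP zE]]]; last first.
  have [_ w0_fin _] := wP 0%N; apply: eq_finsupp w0_fin => i j.
  by rewrite -(sum_fam_one_minus_eps i j wP); apply: eq_bigr => m _; rewrite zE.
pose w m := fam_sub (sum_fam z) (fun i j => \sum_(l < m) z l i j).
exists w; split=> [m | m i j]; last first.
  by rewrite /one_minus_eps /w /fam_sub big_ord_recr /= opprB !addrA subrK addrAC subrr add0r.
split.
- by move=> i j ij_n; rewrite /w /fam_sub (deg_sum_fam zP) // big1 ?subrr // => l _;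
    have [-> //] := zP l.
- by apply: finsuppB => //; apply: finsupp_sum => l; have [] := zP l.
- move=> i j lt_j; rewrite /w /fam_sub (sum_famE (b := m) zP) ?subrr // => l le_l.
  by apply: (prod_elem_vanish zP); lia.
Qed.

Definition fam_rows (f : fam tp) : nat -> fam tp :=
  fun m i j => if j == k - m%:Z then f i j else 0.

Lemma prod_elem_rows (n : int) (f : fam tp) : deg n f -> prod_elem tp k n (fam_rows f).
Proof.
move=> f_deg m; rewrite /fam_rows; split.
- by move=> i j ij_n; case: eqP => // _; apply: f_deg.
- exists [:: (n - (k - m%:Z), k - m%:Z)] => i j; rewrite inE => notin_ij.
  case: eqP => // ej; apply: f_deg; apply: contra notin_ij => /eqP ij.
  by rewrite -ij ej addrK.
- by move=> i j lt_j; case: eqP => // ?; lia.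
Qed.

Lemma sum_fam_rows (f : fam tp) (i j : int) :
  sup_eq Y k -> sum_fam (fam_rows f) i j = f i j.
Proof.
move=> [_ Y0]; rewrite /sum_fam /fam_rows; have [le_jk | lt_kj] := leP j k.
  rewrite (bigD1 (Ordinal (ltnSn `|k - j|))) //= ifT; last by apply/eqP; lia.
  rewrite big1 ?addr0 // => -[p lt_p] ne_p; case: eqP => //= ej.
  by case/eqP: ne_p; apply: val_inj => /=; lia.
rewrite (tensor_eq0 (f i j) (Y0 j lt_kj)) big1 // => -[p lt_p] _; case: eqP => //= ej; lia.
Qed.

End Product.

Theorem corollary3p6 (R : pzRingType) (X : complex R^c) (Y : complex R)
  (tp : forall i j : int, tensor_product (X i) (Y j)) (k : int)
  (hY : sup_eq Y k) :
  (* 1 - eps is a chain map of the product complex to itself *)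
  (forall n z, prod_elem tp k n z -> prod_elem tp k n (one_minus_eps z)) /\
  (forall z m i j, pdiff tp (one_minus_eps z) m i j = one_minus_eps (pdiff tp z) m i j) /\
  (* there is a chain map pi : prod_i X (x) Y_(<= k-i) -> X check(x) Y, given on
     representatives in X bar(x) Y (the quotient by X (x) Y is "modulo finsupp") *)
  exists pi : int -> (nat -> fam tp) -> fam tp,
    forall n : int,
    [/\ (* pi lands in degree n of X bar(x) Y *)
        forall z, prod_elem tp k n z -> deg n (pi n z),
        (* pi is additive (into the quotient) *)
        forall z z', prod_elem tp k n z -> prod_elem tp k n z' ->
          finsupp (fam_sub (pi n (fun m => fam_sub (z m) (z' m)))
                           (fam_sub (pi n z) (pi n z'))),
        (* pi commutes with the differentials (in the quotient) *)
        forall z, prod_elem tp k (n + 1) z ->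
          finsupp (fam_sub (tdiff tp (pi (n + 1) z)) (pi n (pdiff tp z))),
        (* exactness at the left: 1 - eps is injective *)
        forall z, prod_elem tp k n z ->
          (forall m i j, one_minus_eps z m i j = 0) -> forall m i j, z m i j = 0 &
        [/\ (* exactness in the middle: ker pi = im (1 - eps) *)
            forall z, prod_elem tp k n z ->
              (finsupp (pi n z) <->
               exists w, prod_elem tp k n w /\
                 forall m i j, z m i j = one_minus_eps w m i j) &
            (* exactness at the right: pi is surjective onto X check(x) Y *)
            forall f, deg n f ->
              exists z, prod_elem tp k n z /\ finsupp (fam_sub f (pi n z))]].
Proof.
split; first exact: prod_elem_one_minus_eps.
split; first exact: pdiff_one_minus_eps.
exists (fun _ => sum_fam (tp := tp) k) => n; split.
- exact: deg_sum_fam.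
- by move=> z z' _ _; apply: finsupp0 => i j; rewrite /fam_sub sum_famB subrr.
- by move=> z zP; apply: finsupp0 => i j; rewrite /fam_sub (tdiff_sum_fam i j zP) subrr.
- exact: one_minus_eps_inj.
split; first exact: finsupp_sum_famP.
move=> f f_deg; exists (fam_rows k f); split; first exact: prod_elem_rows.
by apply: finsupp0 => i j; rewrite /fam_sub (sum_fam_rows f i j hY) subrr.
Qed.
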